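(* Let $G=(V,E)$ be a $3$-regular graph. Then there exists a polynomial $P(\cdot,\cdot)$ in two variables with integer coefficients such that for all $a,b\in\mathbb{C}$, $$\sum_{\sigma:V\to\{0,1\}}\prod_{\{u,v\}\in E} g_{a,b}(\sigma(u),\sigma(v)) = P(ab,\,a^3+b^3),$$ where $g_{a,b}(0,0)=a$, $g_{a,b}(0,1)=g_{a,b}(1,0)=1$, $g_{a,b}(1,1)=b$. *)

From HB Require Import structures.
From mathcomp Require Import all_boot all_order all_algebra.
From mathcomp Require Import reals.
From mathcomp.real_closed Require Import complex.
Set Implicit Arguments. Unset Strict Implicit. Unset Printing Implicit Defensive.
Import Order.TTheory GRing.Theory Num.Theory.
Local Open Scope ring_scope.

Definition simple_graph (V : finType) (e : rel V) : Prop :=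
  symmetric e /\ irreflexive e.

Definition regular (V : finType) (e : rel V) (d : nat) : Prop :=
  forall v : V, #|[set u | e v u]| = d.

(* Each unordered edge {u,v} is listed once, oriented by enum_rank. *)
Definition edge_pairs (V : finType) (e : rel V) : {set V * V} :=
  [set p : V * V | e p.1 p.2 && (enum_rank p.1 < enum_rank p.2)%N].

(* g_{a,b}(0,0)=a, g(0,1)=g(1,0)=1, g(1,1)=b ; false = 0, true = 1 *)
Definition gab (C : nzRingType) (a b : C) (x y : bool) : C :=
  match x, y with
  | false, false => a
  | true, true => b
  | _, _ => 1
  end.

Definition Zg (C : comNzRingType) (V : finType) (e : rel V) (a b : C) : C :=
  \sum_(sigma : {ffun V -> bool})
     \prod_(p in edge_pairs e) gab a b (sigma p.1) (sigma p.2).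

(* Evaluation of a two-variable integer polynomial P (an element of
   {poly {poly int}}: coefficients in the first variable x, outer variable y)
   at (x, y) in a commutative ring C: P(x,y) = sum_i P_i(x) y^i. *)
Definition eval2 (C : comNzRingType) (P : {poly {poly int}}) (x y : C) : C :=
  \sum_(i < size P) (map_poly intr P`_i).[x] * y ^+ i.

(** Write [E0], [E1] for the numbers of edges with both ends coloured [0],
    resp. [1], so that a colouring contributes the monomial [a^E0 b^E1].
    Counting the edge-ends at the vertices of each colour in a cubic graph
    gives [2 E0 + 3 n1 = 2 E1 + 3 n0], hence [E0 = E1 (mod 3)].  Pairing each
    colouring with its complement therefore groups the monomials into terms
    [(ab)^i (a^(3m) + b^(3m))] and [(ab)^i], and [a^(3m) + b^(3m)] is an integer
    polynomial in [ab] and [a^3 + b^3] by the recurrence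
    [u_(m+2) = (a^3 + b^3) u_(m+1) - (ab)^3 u_m]. *)
From HB Require Import structures.
From mathcomp Require Import all_boot all_order all_algebra.
From mathcomp Require Import reals.
From mathcomp.real_closed Require Import complex.
From mathcomp Require Import ring zify.
Import Order.TTheory GRing.Theory Num.Theory.
Set Implicit Arguments. Unset Strict Implicit.
Local Open Scope ring_scope.

Lemma card_set_sum (T : finType) (P : pred T) : #|[set x | P x]| = (\sum_x P x)%N.
Proof. by rewrite -sum1dep_card big_mkcond; apply: eq_bigr => x _; case: (P x). Qed.

Lemma sum_involution_split (R : nmodType) (I : finType) (c : I -> I)
    (k : I -> int) (F : I -> R) :
  involutive c -> (forall i, k (c i) = - k i) ->
  \sum_i F i = \sum_(i | 0 < k i) (F i + F (c i)) + \sum_(i | k i == 0) F i.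
Proof.
move=> cK kc.
have -> : \sum_i F i = \sum_i ((if 0 < k i then F i else 0)
    + (if k i < 0 then F i else 0) + (if k i == 0 then F i else 0)).
  by apply: eq_bigr => i _; case: ltgtP; rewrite ?addr0 ?add0r.
rewrite !big_split -!big_mkcond /=.
congr (_ + _ + _).
rewrite (reindex_inj (inv_inj cK)) /=.
by apply: eq_bigl => i; rewrite kc oppr_lt0.
Qed.

Section MonochromaticEdges.
Variables (V : finType) (e : rel V).

Definition mono_edges (s : {ffun V -> bool}) (x : bool) : nat :=
  #|[set p in edge_pairs e | (s p.1 == x) && (s p.2 == x)]|.

Definition compl_ffun (s : {ffun V -> bool}) : {ffun V -> bool} := [ffun v => ~~ s v].

Lemma compl_ffunK : involutive compl_ffun.
Proof. by move=> s; apply/ffunP => v; rewrite !ffunE negbK. Qed.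

Lemma mono_edges_compl s x : mono_edges (compl_ffun s) x = mono_edges s (~~ x).
Proof.
apply: eq_card => p; rewrite !inE !ffunE.
by case: (p \in edge_pairs e); case: x; case: (s p.1); case: (s p.2).
Qed.

Variable s : {ffun V -> bool}.

Definition arcs (x y : bool) : nat :=
  \sum_v \sum_u (e v u && (s v == x) && (s u == y)).

Lemma arcs_out d x : regular e d ->
  (arcs x false + arcs x true = d * #|[set v | s v == x]|)%N.
Proof.
move=> reg; rewrite /arcs -big_split card_set_sum big_distrr /=.
apply: eq_bigr => v _; rewrite -big_split /=.
transitivity (\sum_u ((s v == x) * e v u))%N.
  by apply: eq_bigr => u _; case: (e v u); case: (s v == x); case: (s u).
by rewrite -big_distrr /= -(card_set_sum (e v)) reg mulnC.
Qed.

Lemma arcs_sym : symmetric e -> arcs false true = arcs true false.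
Proof.
move=> esym; rewrite /arcs exchange_big /=.
apply: eq_bigr => w _; apply: eq_bigr => z _.
by rewrite (esym z w); case: (e w z); case: (s w); case: (s z).
Qed.

Lemma arcs_mono x : simple_graph e -> arcs x x = (2 * mono_edges s x)%N.
Proof.
move=> [esym eirr].
pose G v u := (e v u && (enum_rank v < enum_rank u)%N && (s v == x) && (s u == x) : nat).
have -> : mono_edges s x = (\sum_v \sum_u G v u)%N.
  rewrite /mono_edges card_set_sum pair_big /=.
  by apply: eq_bigr => p _; rewrite /edge_pairs inE /G !andbA.
have -> : arcs x x = (\sum_v \sum_u (G v u + G u v))%N.
  apply: eq_bigr => v _; apply: eq_bigr => u _.
  rewrite /G (esym u v); case evu: (e v u) => //=.
  have : enum_rank v != enum_rank u.
    by apply: contraTneq evu => /enum_rank_inj ->; rewrite eirr.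
  rewrite neq_ltn => /orP[] lt_vu; rewrite lt_vu ltnNge (ltnW lt_vu) /=;
    by case: (s v == x); case: (s u == x).
under eq_bigr do rewrite big_split /=.
by rewrite big_split /= [X in (_ + X)%N]exchange_big addnn -mul2n.
Qed.

Lemma mono_edges_balance d : simple_graph e -> regular e d ->
  (2 * mono_edges s false + d * #|[set v | s v == true]|
   = 2 * mono_edges s true + d * #|[set v | s v == false]|)%N.
Proof.
move=> graph reg.
have := arcs_out false reg; have := arcs_out true reg.
have := arcs_mono false graph; have := arcs_mono true graph.
have := arcs_sym graph.1; lia.
Qed.

Lemma mono_edges_mod3 : simple_graph e -> regular e 3 ->
  mono_edges s false = mono_edges s true %[mod 3].
Proof. by move=> graph reg; have := mono_edges_balance graph reg; lia. Qed.

Lemma gab_prod (C : comNzRingType) (a b : C) :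
  \prod_(p in edge_pairs e) gab a b (s p.1) (s p.2)
  = a ^+ mono_edges s false * b ^+ mono_edges s true.
Proof.
rewrite -!prodr_const [in RHS]big_mkcond [X in _ * X]big_mkcond -big_split big_mkcond /=.
apply: eq_bigr => p _; rewrite !inE.
by case: (_ && _); case: (s p.1); case: (s p.2); rewrite ?mulr1 ?mul1r.
Qed.

End MonochromaticEdges.

Section Sym3.
Variable C : comNzRingType.

Definition sym3 (f : C -> C -> C) :=
  exists P : {poly {poly int}}, forall a b, f a b = eval2 P (a * b) (a ^+ 3 + b ^+ 3).

Definition eval_int_poly (x : C) : {poly int} -> C :=
  horner_eval x \o map_poly (intr : int -> C).

Lemma eval2E P (x y : C) : eval2 P x y = (map_poly (eval_int_poly x) P).[y].
Proof.
rewrite (@horner_coef_wide _ (size P)); last exact: size_poly.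
by apply: eq_bigr => i _; rewrite coef_map.
Qed.

Lemma sym3_ext f h : (forall a b, f a b = h a b) -> sym3 f -> sym3 h.
Proof. by move=> fh [P fP]; exists P => a b; rewrite -fh. Qed.

Lemma sym3D f h : sym3 f -> sym3 h -> sym3 (fun a b => f a b + h a b).
Proof.
by move=> [P fP] [Q hQ]; exists (P + Q) => a b; rewrite fP hQ !eval2E rmorphD hornerD.
Qed.

Lemma sym3B f h : sym3 f -> sym3 h -> sym3 (fun a b => f a b - h a b).
Proof.
by move=> [P fP] [Q hQ]; exists (P - Q) => a b; rewrite fP hQ !eval2E rmorphB hornerD hornerN.
Qed.

Lemma sym3M f h : sym3 f -> sym3 h -> sym3 (fun a b => f a b * h a b).
Proof.
by move=> [P fP] [Q hQ]; exists (P * Q) => a b; rewrite fP hQ !eval2E rmorphM hornerM.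
Qed.

Lemma sym3_cst n : sym3 (fun _ _ => n%:R).
Proof. by exists n%:R => a b; rewrite eval2E rmorph_nat -polyC_natr hornerC. Qed.

Lemma sym3_mul : sym3 (fun a b => a * b).
Proof.
by exists 'X%:P => a b; rewrite eval2E map_polyC hornerC /= horner_evalE map_polyX hornerX.
Qed.

Lemma sym3_cubes : sym3 (fun a b => a ^+ 3 + b ^+ 3).
Proof. by exists 'X => a b; rewrite eval2E map_polyX hornerX. Qed.

Lemma sym3X f n : sym3 f -> sym3 (fun a b => f a b ^+ n).
Proof.
move=> symf; elim: n => [|n IHn]; first exact: sym3_cst 1.
by apply: sym3_ext (sym3M symf IHn) => a b; rewrite exprS.
Qed.

Lemma sym3_sum (I : finType) (P : pred I) (F : I -> C -> C -> C) :
  (forall i, P i -> sym3 (F i)) -> sym3 (fun a b => \sum_(i | P i) F i a b).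
Proof.
move=> symF; suff sym_seq r : sym3 (fun a b => \sum_(i <- r | P i) F i a b) by [].
elim: r => [|i r IHr]; first by apply: sym3_ext (sym3_cst 0) => a b; rewrite big_nil.
have [Pi | nPi] := boolP (P i).
- by apply: sym3_ext (sym3D (symF i Pi) IHr) => a b; rewrite big_cons Pi.
- by apply: sym3_ext IHr => a b; rewrite big_cons (negPf nPi).
Qed.

Lemma sym3_power_sum m : sym3 (fun a b => a ^+ (3 * m) + b ^+ (3 * m)).
Proof.
suff [] : sym3 (fun a b => a ^+ (3 * m) + b ^+ (3 * m))
       /\ sym3 (fun a b => a ^+ (3 * m.+1) + b ^+ (3 * m.+1)) by [].
elim: m => [|m [IHm IHm1]]; first by split; [apply: sym3_ext (sym3_cst 2) | apply: sym3_cubes].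
split=> //; apply: sym3_ext (sym3B (sym3M sym3_cubes IHm1) (sym3M (sym3X 3 sym3_mul) IHm)).
by move=> a b; rewrite !mulnS !exprD exprMn; ring.
Qed.

Lemma sym3_swap_pair i j : i = j %[mod 3] ->
  sym3 (fun a b => a ^+ i * b ^+ j + a ^+ j * b ^+ i).
Proof.
wlog le_ij : i j / (i <= j)%N.
  move=> sym_le; case: (leqP i j) => [/sym_le // | /ltnW/sym_le sym_ji /esym/sym_ji].
  by apply: sym3_ext => a b; rewrite addrC.
move/esym/eqP; rewrite eqn_mod_dvd // => /dvdnP[m /(congr1 (addn i))].
rewrite subnKC // mulnC => ->.
apply: sym3_ext (sym3M (sym3X i sym3_mul) (sym3_power_sum m)) => a b.
by rewrite !exprD exprMn; ring.
Qed.

End Sym3.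

Theorem lemma4p1 (R : realType) (V : finType) (e : rel V) :
  simple_graph e -> regular e 3 ->
  exists P : {poly {poly int}},
    forall a b : R[i],
      Zg e a b = eval2 P (a * b) (a ^+ 3 + b ^+ 3).
Proof.
move=> graph reg3.
pose k s : int := (mono_edges e s false)%:Z - (mono_edges e s true)%:Z.
pose F s (a b : R[i]) := a ^+ mono_edges e s false * b ^+ mono_edges e s true.
have k_compl s : k (compl_ffun s) = - k s by rewrite /k !mono_edges_compl opprB.
have [P symP] : sym3 (fun a b => \sum_(s | 0 < k s) (F s a b + F (compl_ffun s) a b)
                               + \sum_(s | k s == 0) F s a b).
  apply: sym3D; apply: sym3_sum => s.
  - move=> _; rewrite /F !mono_edges_compl /=.
    exact: sym3_swap_pair (mono_edges_mod3 s graph reg3).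
  - rewrite /k subr_eq0 eqz_nat /F /= => /eqP <-.
    by apply: sym3_ext (sym3X (mono_edges e s false) (@sym3_mul _)) => a b; rewrite exprMn.
exists P => a b; rewrite -symP /Zg.
under eq_bigr do rewrite gab_prod.
exact: (sum_involution_split (fun s => F s a b) (@compl_ffunK V) k_compl).
Qed.
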